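(* Assume the Diagonal Conjecture (DC) holds: for every $r \ge 2$, all integers $3 \le s \le t$ and all integers $k_3,\dots,k_r \ge 2$, we have $R(s,t,k_3,\dots,k_r) \ge R(s-1,t+1,k_3,\dots,k_r)$. Then for every integer $k \ge 3$ and every integer $r \ge 1$, $$R_{2r}(k)-1 \ge (R_r(k-1)-1)(R_r(k+1)-1).$$
   Context: $R(k_1,\dots,k_r)$ denotes the multicolor Ramsey number: the least $n$ such that every coloring of the edges of $K_n$ with $r$ colors contains, for some $i$, a complete subgraph $K_{k_i}$ all of whose edges have color $i$. This number does not depend on the order of the arguments. $R_r(k)=R(k,\dots,k)$ with $r$ arguments equal to $k$. *)

From Stdlib Require Import ClassicalEpsilon.
From mathcomp Require Import all_boot.
Set Implicit Arguments. Unset Strict Implicit. Unset Printing Implicit Defensive.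

(* An r-coloring of the edges of K_n, r = size ks: the edge {x,y} with x < y
   gets colour c x y (values of c on pairs with x >= y are irrelevant).
   ramsey_prop ks n : every such colouring contains, for some colour i,
   a set S of k_i vertices all of whose edges have colour i. *)
Definition ramsey_prop (ks : seq nat) (n : nat) : Prop :=
  forall c : 'I_n -> 'I_n -> 'I_(size ks),
    exists i : 'I_(size ks), exists S : {set 'I_n},
      #|S| = nth 0 ks i /\
      (forall x y : 'I_n, x \in S -> y \in S -> x < y -> c x y = i).

(* Multicolour Ramsey number R(k_1,...,k_r): the least n with ramsey_prop
   (such an n always exists by Ramsey's theorem; default 0 otherwise). *)
Definition Ramsey (ks : seq nat) : nat :=
  match excluded_middle_informative
          (exists n, ramsey_prop ks n /\ forall m, ramsey_prop ks m -> n <= m)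
  with
  | left h => proj1_sig (constructive_indefinite_description _ h)
  | right _ => 0
  end.

Definition Ramsey_diag (r k : nat) : nat := Ramsey (nseq r k).

Definition DiagonalConjecture : Prop :=
  forall (s t : nat) (ks : seq nat),
    3 <= s -> s <= t -> all (fun k => 2 <= k) ks ->
    Ramsey [:: s.-1, t.+1 & ks] <= Ramsey [:: s, t & ks].

From Stdlib Require Import Classical ClassicalEpsilon.
From Stdlib Require Import FunctionalExtensionality PropExtensionality Wf_nat.
From mathcomp Require Import all_boot zify.
Set Implicit Arguments. Unset Strict Implicit. Unset Printing Implicit Defensive.

(* Product colouring: if colourings of K_a with colours 1..r and of K_b with
   colours r+1..2r avoid the monochromatic cliques of sizes k_1..k_r and
   l_1..l_r respectively, then colouring K_(ab) = K_a x K_b by the first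
   colouring between blocks and by the second inside a block avoids them
   all, so R(k_1,..,k_r,l_1,..,l_r) - 1 >= (R(k_1,..,k_r) - 1)(R(l_1,..,l_r) - 1).
   With k_i = k - 1 and l_i = k + 1, r applications of DC, each turning a pair
   (k - 1, k + 1) of arguments into (k, k), together with the invariance of
   Ramsey numbers under permutation of their arguments, bound the left-hand
   side by R_(2r)(k).  Ramsey's theorem is needed so that [Ramsey] really is
   the least n with the Ramsey property. *)

Definition monochromatic n p (c : 'I_n -> 'I_n -> 'I_p) (i : 'I_p)
    (S : {set 'I_n}) :=
  forall x y, x \in S -> y \in S -> x < y -> c x y = i.

Definition avoids ks n (c : 'I_n -> 'I_n -> 'I_(size ks)) :=
  forall i S, monochromatic c i S -> #|S| <> nth 0 ks i.

Lemma not_ramsey_propP ks n : ~ ramsey_prop ks n <-> exists c, @avoids ks n c.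
Proof.
split=> [notR | [c avoid_c] R]; last first.
  by have [i [S [cardS monoS]]] := R c; exact: avoid_c monoS cardS.
apply: NNPP => no_c; apply: notR => c; apply: NNPP => no_mono.
by apply: no_c; exists c => i S monoS cardS; apply: no_mono; exists i, S.
Qed.

Lemma ramsey_prop_widen ks m n : m <= n -> ramsey_prop ks m -> ramsey_prop ks n.
Proof.
move=> le_mn R c.
have [i [S [cardS monoS]]] := R (fun x y => c (widen_ord le_mn x) (widen_ord le_mn y)).
exists i, (widen_ord le_mn @: S); split.
  by rewrite card_imset // => x y /(congr1 val) /= /val_inj.
by move=> _ _ /imsetP[x xS ->] /imsetP[y yS ->]; exact: monoS.
Qed.

Lemma ramsey_prop0 ks : ramsey_prop ks 0 -> 0 \in ks.
Proof.
have c : 'I_0 -> 'I_0 -> 'I_(size ks) by case.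
move=> /(_ c) [i [S [cardS _]]].
have := max_card (mem S); rewrite card_ord leqn0 => /eqP S0.
by rewrite -S0 cardS mem_nth.
Qed.

(** * Ramsey's theorem *)

Lemma leq_sum_exists p (u v : 'I_p -> nat) :
  0 < p -> \sum_i u i <= \sum_i v i -> exists i, u i <= v i.
Proof.
move=> p_gt0 le_uv; apply/existsP; apply: contraLR le_uv => /existsPn lt_vu.
rewrite -ltnNge; have : \sum_i (v i + 1) <= \sum_i u i.
  by apply: leq_sum => i _; rewrite addn1 ltnNge lt_vu.
rewrite big_split /= sum_nat_const card_ord muln1; lia.
Qed.

Lemma card_fibres (T : finType) p (f : T -> 'I_p) (A : {set T}) :
  #|A| = \sum_i #|[set y in A | f y == i]|.
Proof.
rewrite -sum1_card (partition_big f predT) //=; apply: eq_bigr => i _.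
by rewrite -sum1_card; apply: eq_bigl => y; rewrite !inE.
Qed.

Lemma monochromatic_setU1 n p (c : 'I_n -> 'I_n -> 'I_p) i S (x : 'I_n) :
  monochromatic c i S -> (forall y, y \in S -> x < y /\ c x y = i) ->
  monochromatic c i (x |: S).
Proof.
move=> monoS x_below y z; rewrite !in_setU1.
case/orP=> [/eqP-> | yS] /orP[/eqP-> | zS]; rewrite ?ltnn // => lt_yz.
- by have [] := x_below z zS.
- by have [/(ltn_trans lt_yz)] := x_below y yS; rewrite ltnn.
- exact: monoS.
Qed.

(* [w i] is the size of the clique wanted in colour [i]; the set [A] lets the
   induction recurse into the neighbourhood of a vertex. *)
Definition ramsey_bound p (w : 'I_p -> nat) N :=
  forall n (c : 'I_n -> 'I_n -> 'I_p) (A : {set 'I_n}), N <= #|A| ->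
    exists i (S : {set 'I_n}), S \subset A /\ #|S| = w i /\ monochromatic c i S.

Lemma ramsey_bound0 p (w : 'I_p -> nat) i : w i = 0 -> ramsey_bound w 0.
Proof.
move=> wi0 n c A _; exists i, set0; rewrite sub0set cards0 wi0.
by do 2!split=> //; move=> x y; rewrite inE.
Qed.

Lemma sum_pred_at p (w : 'I_p -> nat) i : 0 < w i ->
  (\sum_j (if j == i then (w j).-1 else w j)).+1 = \sum_j w j.
Proof.
move=> wi_gt0; rewrite (bigD1 i) //= [RHS](bigD1 i) //= eqxx -addSn prednK //.
by congr (_ + _); apply: eq_bigr => j /negbTE->.
Qed.

Lemma ramsey_bound_exists m p (w : 'I_p -> nat) :
  0 < p -> \sum_i w i <= m -> exists N, ramsey_bound w N.
Proof.
elim: m p w => [|m IH] p w p_gt0 sum_w.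
  exists 0; apply: (@ramsey_bound0 _ _ (Ordinal p_gt0)); apply/eqP.
  by rewrite -leqn0 (leq_trans _ sum_w) // (bigD1 (Ordinal p_gt0)) //= leq_addr.
have [i /eqP wi0 | w_nz] := pickP (fun i => w i == 0).
  by exists 0; exact: ramsey_bound0 wi0.
have w_gt0 i : 0 < w i by rewrite lt0n (negbT (w_nz i)).
pose dec i j := if j == i then (w j).-1 else w j.
have [N bound_N] : exists N : 'I_p -> nat, forall i, ramsey_bound (dec i) (N i).
  apply: (@fin_all_exists _ (fun=> nat) (fun i => ramsey_bound (dec i))) => i.
  by apply: IH => //; rewrite -ltnS /dec sum_pred_at.
exists (\sum_i N i).+1 => n c A le_NA.
have [x0 x0A] : exists x, x \in A.
  by apply/set0Pn; rewrite -card_gt0 (leq_trans _ le_NA).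
(* [x] is the least vertex of [A]: the edges from [x] into [A] have colour [c x y]. *)
have [x xA x_min] := arg_minnP (fun y : 'I_n => val y) x0A.
have {}xA : x \in A := xA.
pose B i := [set y in A :\ x | c x y == i].
have [i le_NB] : exists i, N i <= #|B i|.
  apply: leq_sum_exists => //; rewrite -card_fibres.
  by move: le_NA; rewrite (cardsD1 x A) xA add1n ltnS.
have [j [S [SB [cardS monoS]]]] := bound_N i n c (B i) le_NB.
have SA : S \subset A :\ x.
  by apply: subset_trans SB _; apply/subsetP => y; rewrite inE => /andP[].
case: (eqVneq j i) cardS monoS => [-> | ji] cardS monoS; last first.
  by exists j, S; rewrite (subset_trans SA (subD1set A x)) cardS /dec (negbTE ji).
exists i, (x |: S); split; last split.
- by rewrite subUset sub1set xA (subset_trans SA (subD1set A x)).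
- have xS : x \notin S by apply/negP => /(subsetP SA); rewrite !inE eqxx.
  by rewrite cardsU1 xS cardS /dec eqxx add1n prednK ?w_gt0.
- apply: monochromatic_setU1 => // y yS; move/subsetP: SB => /(_ y yS).
  rewrite !inE => /andP[/andP[ny_x yA] /eqP cxy]; split=> //.
  by rewrite ltn_neqAle val_eqE eq_sym ny_x (x_min y yA).
Qed.

Lemma ramsey_prop_exists ks : 0 < size ks -> exists n, ramsey_prop ks n.
Proof.
move=> ks_gt0.
have [N bound_N] := @ramsey_bound_exists _ _ (nth 0 ks) ks_gt0 (leqnn _).
exists N => c; have le_NT : N <= #|[set: 'I_N]| by rewrite cardsT card_ord.
by have [i [S [_ [cardS monoS]]]] := bound_N N c setT le_NT; exists i, S.
Qed.

(** * Ramsey numbers *)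

Lemma ex_least (P : nat -> Prop) :
  (exists n, P n) -> exists n, P n /\ forall m, P m -> n <= m.
Proof.
move=> exP; have [n [[Pn n_min] _]] :=
  dec_inh_nat_subset_has_unique_least_element P (fun n => classic (P n)) exP.
by exists n; split=> // m /n_min /leP.
Qed.

Lemma RamseyP ks : 0 < size ks ->
  ramsey_prop ks (Ramsey ks) /\ forall m, ramsey_prop ks m -> Ramsey ks <= m.
Proof.
move=> ks_gt0; rewrite /Ramsey.
case: excluded_middle_informative => [? | no_least].
  by case: constructive_indefinite_description.
by exfalso; apply/no_least/ex_least/ramsey_prop_exists.
Qed.

Lemma ramsey_propE ks n : 0 < size ks -> ramsey_prop ks n <-> Ramsey ks <= n.
Proof.
move=> /RamseyP[R_prop R_min]; split=> [/R_min // | le_Rn].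
exact: ramsey_prop_widen le_Rn R_prop.
Qed.

Lemma Ramsey_gt0 ks : 0 < size ks -> 0 \notin ks -> 0 < Ramsey ks.
Proof.
move=> ks_gt0 ks_pos; have [R_prop _] := RamseyP ks_gt0.
by rewrite lt0n; apply: contra ks_pos => /eqP R0; apply: ramsey_prop0; rewrite -R0.
Qed.

Lemma ramsey_prop_relabel ks ks' (f : 'I_(size ks) -> 'I_(size ks')) n :
  bijective f -> (forall i, nth 0 ks' (f i) = nth 0 ks i) ->
  ramsey_prop ks n -> ramsey_prop ks' n.
Proof.
case=> g _ gK nth_f R c; have [i [S [cardS monoS]]] := R (fun x y => g (c x y)).
exists (f i), S; split; first by rewrite nth_f.
by move=> x y xS yS lt_xy; rewrite -(monoS x y xS yS lt_xy) gK.
Qed.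

Lemma ramsey_prop_perm ks ks' n :
  perm_eq ks ks' -> ramsey_prop ks n -> ramsey_prop ks' n.
Proof.
move=> eq_ks; have [Is perm_Is ks_def] := perm_iotaP 0 eq_ks.
have size_Is : size Is = size ks by rewrite ks_def size_map.
have uniq_Is : uniq Is by rewrite (perm_uniq perm_Is) iota_uniq.
have Is_lt (i : 'I_(size ks)) : nth 0 Is i < size ks'.
  have : nth 0 Is i \in Is by rewrite mem_nth ?size_Is.
  by rewrite (perm_mem perm_Is) mem_iota.
apply: (@ramsey_prop_relabel _ _ (fun i => Ordinal (Is_lt i))).
  apply: inj_card_bij; last by rewrite !card_ord (perm_size eq_ks).
  move=> i j /(congr1 val) /= /eqP; rewrite nth_uniq ?size_Is //.
  by move=> /eqP /val_inj.
move=> i; have lt_i : (i : nat) < size Is by rewrite size_Is.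
by rewrite /= -(nth_map 0 0 _ lt_i) -ks_def.
Qed.

Lemma Ramsey_perm ks ks' : perm_eq ks ks' -> Ramsey ks = Ramsey ks'.
Proof.
move=> eq_ks; rewrite /Ramsey; have -> // : ramsey_prop ks = ramsey_prop ks'.
apply: functional_extensionality => n; apply: propositional_extensionality.
by split; apply: ramsey_prop_perm; rewrite // perm_sym.
Qed.

(** * The product colouring *)

Lemma ltn_eqdiv d m n : m %/ d = n %/ d -> (m < n) = (m %% d < n %% d).
Proof. by move=> eq_div; rewrite {1}(divn_eq m d) {1}(divn_eq n d) eq_div ltn_add2l. Qed.

Lemma eqdiv_eqmod d m n : m %/ d = n %/ d -> m %% d = n %% d -> m = n.
Proof. by move=> eq_div eq_mod; rewrite (divn_eq m d) (divn_eq n d) eq_div eq_mod. Qed.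

Lemma ltn_pairs_sym n (S : {set 'I_n}) (P : 'I_n -> 'I_n -> Prop) :
  (forall x y, P x y -> P y x) ->
  (forall x y, x \in S -> y \in S -> x < y -> P x y) ->
  forall x y, x \in S -> y \in S -> x != y -> P x y.
Proof.
move=> P_sym P_lt x y xS yS; rewrite -val_eqE neq_ltn => /orP[] lt.
  exact: P_lt.
exact/P_sym/P_lt.
Qed.

Section ProductColouring.

Variables ks1 ks2 : seq nat.

Definition lcolour (i : 'I_(size ks1)) : 'I_(size (ks1 ++ ks2)) :=
  cast_ord (esym (size_cat ks1 ks2)) (lshift (size ks2) i).

Definition rcolour (j : 'I_(size ks2)) : 'I_(size (ks1 ++ ks2)) :=
  cast_ord (esym (size_cat ks1 ks2)) (rshift (size ks1) j).

Lemma nth_lcolour i : nth 0 (ks1 ++ ks2) (lcolour i) = nth 0 ks1 i.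
Proof. by rewrite nth_cat /= ltn_ord. Qed.

Lemma nth_rcolour j : nth 0 (ks1 ++ ks2) (rcolour j) = nth 0 ks2 j.
Proof. by rewrite nth_cat /= ltnNge leq_addr addKn. Qed.

Lemma lcolour_inj : injective lcolour.
Proof. by move=> i i' /(congr1 val) /= /val_inj. Qed.

Lemma rcolour_inj : injective rcolour.
Proof. by move=> j j' /(congr1 val) /= /addnI /val_inj. Qed.

Lemma lcolour_neq_rcolour i j : lcolour i != rcolour j.
Proof. by rewrite -val_eqE /= neq_ltn ltn_addr. Qed.

Lemma colour_catP i : (exists i1, i = lcolour i1) \/ (exists i2, i = rcolour i2).
Proof.
have := splitK (cast_ord (size_cat ks1 ks2) i).
case: split => j /(congr1 (cast_ord (esym (size_cat ks1 ks2)))).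
all: rewrite cast_ordK => <-.
  by left; exists j.
by right; exists j.
Qed.

Variables (A B : nat).
Variables (c1 : 'I_A -> 'I_A -> 'I_(size ks1)) (c2 : 'I_B -> 'I_B -> 'I_(size ks2)).

Lemma ord_prod_gt0 (x : 'I_(A * B)) : 0 < B.
Proof.
have : 0 < A * B := leq_ltn_trans (leq0n x) (ltn_ord x).
by rewrite muln_gt0 => /andP[].
Qed.

Lemma ltn_block (x : 'I_(A * B)) : x %/ B < A.
Proof. by rewrite ltn_divLR ?ltn_ord // (ord_prod_gt0 x). Qed.

Lemma ltn_offset (x : 'I_(A * B)) : x %% B < B.
Proof. exact: ltn_pmod (ord_prod_gt0 x). Qed.

(* Vertex [x] of K_(AB) is vertex [x %% B] of the [x %/ B]-th copy of K_B. *)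
Definition block x := Ordinal (ltn_block x).
Definition offset x := Ordinal (ltn_offset x).

Lemma leq_block (x y : 'I_(A * B)) : x <= y -> block x <= block y.
Proof. exact: leq_div2r. Qed.

Lemma ltn_offset_eq (x y : 'I_(A * B)) :
  block x = block y -> (x < y) = (offset x < offset y).
Proof. by move/(congr1 val) => /ltn_eqdiv. Qed.

Lemma block_offset_inj (x y : 'I_(A * B)) :
  block x = block y -> offset x = offset y -> x = y.
Proof.
by move=> /(congr1 val) eq_b /(congr1 val) eq_o; apply/val_inj/(eqdiv_eqmod eq_b).
Qed.

Definition prod_colouring (x y : 'I_(A * B)) : 'I_(size (ks1 ++ ks2)) :=
  if block x == block y then rcolour (c2 (offset x) (offset y))
  else lcolour (c1 (block x) (block y)).

Lemma prod_colouring_lcolour (x y : 'I_(A * B)) i :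
  prod_colouring x y = lcolour i -> block x != block y /\ c1 (block x) (block y) = i.
Proof.
rewrite /prod_colouring; case: eqP => [_ | /eqP neq_b] e.
  by have := lcolour_neq_rcolour i (c2 (offset x) (offset y)); rewrite e eqxx.
by split=> //; exact: lcolour_inj.
Qed.

Lemma prod_colouring_rcolour (x y : 'I_(A * B)) j :
  prod_colouring x y = rcolour j -> block x = block y /\ c2 (offset x) (offset y) = j.
Proof.
rewrite /prod_colouring; case: eqP => [eq_b | _] e.
  by split=> //; exact: rcolour_inj.
by have := lcolour_neq_rcolour (c1 (block x) (block y)) j; rewrite e eqxx.
Qed.

Lemma monochromatic_lcolour i S : monochromatic prod_colouring (lcolour i) S ->
  #|block @: S| = #|S| /\ monochromatic c1 i (block @: S).
Proof.
move=> monoS.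
have across x y : x \in S -> y \in S -> x < y ->
    block x != block y /\ c1 (block x) (block y) = i.
  by move=> xS yS /(monoS x y xS yS) /prod_colouring_lcolour.
have sep x y : x \in S -> y \in S -> x != y -> block x != block y.
  apply: (ltn_pairs_sym (P := fun x y => block x != block y)).
    by move=> {}x {}y; rewrite eq_sym.
  by move=> {}x {}y xS yS /(across x y xS yS) [].
split.
  apply: card_in_imset => x y xS yS eq_b; apply/eqP; apply: contraT.
  by move=> /(sep x y xS yS); rewrite eq_b eqxx.
move=> _ _ /imsetP[x xS ->] /imsetP[y yS ->] lt_b.
have lt_xy : x < y by rewrite ltnNge; apply: contraTN lt_b => /leq_block; rewrite leqNgt.
exact: (across x y xS yS lt_xy).2.
Qed.

Lemma monochromatic_rcolour j S : monochromatic prod_colouring (rcolour j) S ->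
  #|offset @: S| = #|S| /\ monochromatic c2 j (offset @: S).
Proof.
move=> monoS.
have within x y : x \in S -> y \in S -> x < y ->
    block x = block y /\ c2 (offset x) (offset y) = j.
  by move=> xS yS /(monoS x y xS yS) /prod_colouring_rcolour.
have same_block x y : x \in S -> y \in S -> block x = block y.
  move=> xS yS; have [-> // | neq_xy] := eqVneq x y.
  move: xS yS neq_xy; apply: (ltn_pairs_sym (P := fun x y => block x = block y)).
    by move=> ? ? ->.
  by move=> {}x {}y xS yS /(within x y xS yS) [].
split.
  by apply: card_in_imset => x y xS yS; exact/block_offset_inj/same_block.
move=> _ _ /imsetP[x xS ->] /imsetP[y yS ->] lt_o.
have lt_xy : x < y by rewrite (ltn_offset_eq (same_block x y xS yS)).
exact: (within x y xS yS lt_xy).2.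
Qed.

Lemma prod_colouring_avoids : avoids c1 -> avoids c2 -> avoids prod_colouring.
Proof.
move=> avoid1 avoid2 i; case: (colour_catP i) => [[i1 ->] | [i2 ->]] S monoS.
  have [<- mono1] := monochromatic_lcolour monoS.
  by rewrite nth_lcolour; exact: avoid1 mono1.
have [<- mono2] := monochromatic_rcolour monoS.
by rewrite nth_rcolour; exact: avoid2 mono2.
Qed.

End ProductColouring.

Lemma not_ramsey_prop_cat ks1 ks2 A B :
  ~ ramsey_prop ks1 A -> ~ ramsey_prop ks2 B -> ~ ramsey_prop (ks1 ++ ks2) (A * B).
Proof.
move=> /not_ramsey_propP[c1 avoid1] /not_ramsey_propP[c2 avoid2].
by apply/not_ramsey_propP; exists (prod_colouring c1 c2); exact: prod_colouring_avoids.
Qed.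

Lemma Ramsey_cat ks1 ks2 :
  0 < size ks1 -> 0 < size ks2 -> 0 \notin ks1 -> 0 \notin ks2 ->
  (Ramsey ks1 - 1) * (Ramsey ks2 - 1) <= Ramsey (ks1 ++ ks2) - 1.
Proof.
have not_R ks : 0 < size ks -> 0 \notin ks -> ~ ramsey_prop ks (Ramsey ks - 1).
  move=> ks_gt0 ks_pos /(ramsey_propE _ ks_gt0).
  by have := Ramsey_gt0 ks_gt0 ks_pos; lia.
move=> ks1_gt0 ks2_gt0 ks1_pos ks2_pos.
suff lt_R : (Ramsey ks1 - 1) * (Ramsey ks2 - 1) < Ramsey (ks1 ++ ks2).
  by rewrite leq_subRL ?add1n // (leq_ltn_trans (leq0n _) lt_R).
rewrite ltnNge; apply/negP => le_R.
apply: (not_ramsey_prop_cat (not_R _ ks1_gt0 ks1_pos) (not_R _ ks2_gt0 ks2_pos)).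
by apply/ramsey_propE; rewrite // size_cat addn_gt0 ks1_gt0.
Qed.

(** * Consequences of the Diagonal Conjecture *)

Lemma Ramsey_balance_le k j m : DiagonalConjecture -> 3 <= k ->
  Ramsey (nseq j k.-1 ++ nseq j k.+1 ++ nseq m k) <= Ramsey (nseq (j.*2 + m) k).
Proof.
move=> DC k_ge3; elim: j m => [// | j IH] m.
rewrite (@Ramsey_perm _ [:: k.-1, k.+1 & nseq j k.-1 ++ nseq j k.+1 ++ nseq m k]);
  last by rewrite /= perm_cons -cat1s perm_catCA.
apply: leq_trans (DC k k _ k_ge3 (leqnn k) _) _.
  by apply/allP => x; rewrite !mem_cat !mem_nseq => /or3P[] /andP[_ /eqP ->]; lia.
rewrite (@Ramsey_perm _ (nseq j k.-1 ++ nseq j k.+1 ++ nseq m.+2 k)); last first.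
  by rewrite perm_sym catA -[nseq m.+2 k]/([:: k; k] ++ nseq m k) perm_catCA -catA.
by rewrite doubleS !addSnnS; exact: IH.
Qed.

Theorem lemma1 :
  DiagonalConjecture ->
  forall k r : nat, 3 <= k -> 1 <= r ->
    (Ramsey_diag r k.-1 - 1) * (Ramsey_diag r k.+1 - 1)
      <= Ramsey_diag (2 * r) k - 1.
Proof.
move=> DC k r k_ge3 r_gt0.
have nseq_gt0 (x : nat) : 0 < size (nseq r x) by rewrite size_nseq.
have nseq_pos x : 0 < x -> 0 \notin nseq r x.
  by move=> x_gt0; rewrite mem_nseq; apply/negP => /andP[_ /eqP]; lia.
have km_pos : 0 \notin nseq r k.-1 by apply: nseq_pos; lia.
have lower := Ramsey_cat (nseq_gt0 k.-1) (nseq_gt0 k.+1) km_pos (nseq_pos k.+1 isT).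
have upper : Ramsey (nseq r k.-1 ++ nseq r k.+1) <= Ramsey_diag (2 * r) k.
  by have := Ramsey_balance_le r 0 DC k_ge3; rewrite cats0 addn0 -mul2n.
exact: leq_trans lower (leq_sub2r 1 upper).
Qed.
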